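(* Let $\Omega_2=\{\omega_1,\omega_2\}$ with $\omega_1\neq\omega_2$, and $\mathcal{A}_2=2^{\Omega_2}$. A $q$-measure $\mu$ on $\mathcal{A}_2$ actualizes the coevent $\omega_1^*\omega_2^*$ if and only if $\mu(\{\omega_1\})=\mu(\{\omega_2\})=0$ and $\mu(\Omega_2)>0$.
   Context: Let $\Omega$ be a finite nonempty set and $\mathcal{A}=2^\Omega$. A coevent is a map $\phi:\mathcal{A}\to\{0,1\}$ with $\phi(\emptyset)=0$. For $\omega\in\Omega$ the evaluation map $\omega^*$ is the coevent with $\omega^*(A)=1$ if $\omega\in A$ and $0$ otherwise. Coevents are combined pointwise: $(\phi\oplus\psi)(A)=\phi(A)+\psi(A) \bmod 2$ and $(\phi\psi)(A)=\phi(A)\psi(A)$. For $f:\Omega\to[0,\infty)$ and a coevent $\phi$, the $q$-integral is $\int f\,d\phi=\int_0^\infty \phi(\{\omega\in\Omega: f(\omega)>\lambda\})\,d\lambda$ (Lebesgue measure in $\lambda$), and for $A\in\mathcal{A}$, $\int_A f\,d\phi=\int f\chi_A\,d\phi$. A $q$-measure is a map $\mu:\mathcal{A}\to[0,\infty)$ such that for all pairwise disjoint $A,B,C\in\mathcal{A}$: $\mu(A\cup B\cup C)=\mu(A\cup B)+\mu(A\cup C)+\mu(B\cup C)-\mu(A)-\mu(B)-\mu(C)$. The $q$-measure $\mu$ actualizes $\phi$ if there is a symmetric function $f:\Omega\times\Omega\to(0,\infty)$ such that for all $A\in\mathcal{A}$, $\mu(A)=\int g_A\,d\phi$, where $g_A(\omega')=\int_A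 f(\cdot,\omega')\,d\phi$ (the $q$-integral over $A$ of $\omega\mapsto f(\omega,\omega')$). *)

From Stdlib Require Import Reals.
From mathcomp Require Import all_boot.
Set Implicit Arguments. Unset Strict Implicit. Unset Printing Implicit Defensive.

Open Scope R_scope.

Definition coevent (T : finType) (phi : {set T} -> bool) : Prop := phi set0 = false.

Definition evalc (T : finType) (w : T) : {set T} -> bool := fun A => w \in A.

Definition comul (T : finType) (phi psi : {set T} -> bool) : {set T} -> bool :=
  fun A => phi A && psi A.
Definition coadd (T : finType) (phi psi : {set T} -> bool) : {set T} -> bool :=
  fun A => xorb (phi A) (psi A).

Definition b2R (b : bool) : R := if b then 1 else 0.
Definition Rltb (x y : R) : bool := if Rlt_dec x y then true else false.

Definition levelset (T : finType) (f : T -> R) (l : R) : {set T} :=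
  [set w | Rltb l (f w)].

(* qint_is f phi v : the q-integral  int_0^oo phi({f > l}) dl  equals v.
   Since the integrand vanishes for l >= max f, the improper integral over
   [0,oo) is the (Riemann) integral over [0,M] for any upper bound M of f. *)
Definition qint_is (T : finType) (f : T -> R) (phi : {set T} -> bool) (v : R) : Prop :=
  forall M : R, 0 <= M -> (forall w, f w <= M) ->
    exists pr : Riemann_integrable (fun l => b2R (phi (levelset f l))) 0 M,
      RiemannInt pr = v.

Definition is_qmeasure (T : finType) (mu : {set T} -> R) : Prop :=
  (forall A, 0 <= mu A) /\
  (forall A B C : {set T},
      [disjoint A & B] -> [disjoint A & C] -> [disjoint B & C] ->
      mu (A :|: B :|: C) =
        mu (A :|: B) + mu (A :|: C) + mu (B :|: C) - mu A - mu B - mu C).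

Definition actualizes (T : finType) (mu : {set T} -> R) (phi : {set T} -> bool) : Prop :=
  exists f : T -> T -> R,
    (forall x y, f x y = f y x) /\ (forall x y, 0 < f x y) /\
    exists g : {set T} -> T -> R,
      (forall (A : {set T}) (w' : T), qint_is (fun w => if w \in A then f w w' else 0) phi (g A w')) /\
      (forall A : {set T}, qint_is (g A) phi (mu A)).

From Stdlib Require Import Reals Lra RiemannInt_SF RiemannInt.
From mathcomp Require Import all_boot.
Open Scope R_scope.

(* The level sets of [f] meet {w1, w2} exactly when [l < min (f w1) (f w2)], so
   the q-integral of [f] against w1* w2* is [max 0 (min (f w1) (f w2))]; on a
   two-point space a q-measure is moreover determined by its values on the
   singletons and on the whole space.  If [mu] is actualized, integrating twice
   kills the singletons (one of the two values vanishes) while every value on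
   the whole space is positive.  Conversely, the constant kernel [mu Omega]
   actualizes [mu]. *)

Lemma StepFun_open_const {f : R -> R} {a b c : R} :
  a <= b -> (forall x, a < x < b -> f x = c) -> IsStepFun f a b.
Proof.
move=> Hab Hf; exists (a :: b :: nil), (c :: nil); repeat split.
- by move=> i /= Hi; inversion Hi; [| inversion H0].
- by rewrite /= /Rmin; case: Rle_dec; lra.
- by rewrite /= /Rmax; case: Rle_dec; lra.
- move=> i /= Hi; inversion Hi; last by inversion H0.
  by move=> x /= /Hf.
Qed.

Lemma RiemannInt_open_const {f : R -> R} {a b c : R} :
  a <= b -> (forall x, a < x < b -> f x = c) ->
  { pr : Riemann_integrable f a b | RiemannInt pr = c * (b - a) }.
Proof.
move=> Hab Hf.
have pr : Riemann_integrable f a b.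
  move=> eps; exists (mkStepFun (StepFun_open_const Hab Hf)).
  exists (mkStepFun (StepFun_P4 a b 0)); split.
  - by move=> t _ /=; rewrite /fct_cte Rminus_diag_eq // Rabs_R0; lra.
  - by rewrite StepFun_P18 Rmult_0_l Rabs_R0; apply: cond_pos.
exists pr; rewrite (RiemannInt_P18 pr (RiemannInt_P14 a b c) Hab Hf).
exact: RiemannInt_P15.
Qed.

Lemma RiemannInt_indicator_lt (h : R -> R) m M :
  (forall l, h l = b2R (Rltb l m)) -> 0 <= M -> m <= M ->
  exists pr : Riemann_integrable h 0 M, RiemannInt pr = Rmax 0 m.
Proof.
move=> Hh HM HmM; rewrite /b2R /Rltb in Hh.
case: (Rle_dec m 0) => Hm.
  have h0 : forall x, 0 < x < M -> h x = 0.
    by move=> x Hx; rewrite Hh; case: Rlt_dec => ? /=; lra.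
  have [pr E] := RiemannInt_open_const HM h0.
  by exists pr; rewrite E Rmax_left; lra.
have h1 : forall x, 0 < x < m -> h x = 1 by move=> x Hx; rewrite Hh; case: Rlt_dec => ? /=; lra.
have h0 : forall x, m < x < M -> h x = 0 by move=> x Hx; rewrite Hh; case: Rlt_dec => ? /=; lra.
have [pr1 E1] := RiemannInt_open_const (Rlt_le _ _ (Rnot_le_lt _ _ Hm)) h1.
have [pr2 E2] := RiemannInt_open_const HmM h0.
exists (RiemannInt_P24 pr1 pr2); rewrite -(RiemannInt_P26 pr1 pr2) E1 E2 Rmax_right; lra.
Qed.

Lemma finType_bounded (T : finType) (f : T -> R) :
  exists M, 0 <= M /\ forall w, f w <= M.
Proof.
pose bound s := foldr (fun w m => Rmax (f w) m) 0 s.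
have bound_ge0 s : 0 <= bound s.
  by elim: s => [|w s IH] /=; [lra | apply: Rle_trans (Rmax_r _ _)].
have bound_ge s w : w \in s -> f w <= bound s.
  elim: s => [|v s IH] //=; rewrite inE => /orP [/eqP -> | /IH]; first exact: Rmax_l.
  by move=> H; apply: Rle_trans H (Rmax_r _ _).
by exists (bound (enum T)); split=> // w; apply: bound_ge; rewrite mem_enum.
Qed.

Lemma qint_is_unique {T : finType} {f : T -> R} {phi v v'} :
  qint_is f phi v -> qint_is f phi v' -> v = v'.
Proof.
have [M [HM HfM]] := finType_bounded _ f.
move=> /(_ M HM HfM) [pr <-] /(_ M HM HfM) [pr' <-]; exact: RiemannInt_P5.
Qed.

Lemma Rmax0_Rmin_eq0l a b : a = 0 -> 0 <= b -> Rmax 0 (Rmin a b) = 0.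
Proof. by move=> -> Hb; rewrite Rmin_left // Rmax_left //; lra. Qed.

Lemma Rmax0_Rmin_eq0r a b : b = 0 -> 0 <= a -> Rmax 0 (Rmin a b) = 0.
Proof. by move=> -> Ha; rewrite Rmin_right // Rmax_left //; lra. Qed.

Lemma Rmax0_Rmin_gt0 a b : 0 < a -> 0 < b -> 0 < Rmax 0 (Rmin a b).
Proof. by move=> Ha Hb; apply: Rlt_le_trans (Rmax_r _ _); apply: Rmin_glb_lt. Qed.

Lemma Rmax0_Rmin_diag a : 0 <= a -> Rmax 0 (Rmin a a) = a.
Proof. by move=> Ha; rewrite Rmin_left ?Rmax_right //; lra. Qed.

Lemma qmeasure_set0 (T : finType) (mu : {set T} -> R) : is_qmeasure mu -> mu set0 = 0.
Proof.
move=> [_ hadd]; have d0 : [disjoint (set0 : {set T}) & set0] by rewrite -setI_eq0 setI0.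
by have := hadd _ _ _ d0 d0 d0; rewrite !set0U; lra.
Qed.

Section TwoPoints.

Context {T : finType} (w1 w2 : T).
Hypothesis w1_neq_w2 : w1 <> w2.
Hypothesis two_points : forall w : T, w = w1 \/ w = w2.

Let phi := comul (evalc w1) (evalc w2).

Lemma comul_evalc_levelset (f : T -> R) l :
  b2R (phi (levelset f l)) = b2R (Rltb l (Rmin (f w1) (f w2))).
Proof.
rewrite /phi /comul /evalc /levelset !inE /b2R /Rltb /Rmin.
by case: Rle_dec => ?; case: Rlt_dec => ?; case: Rlt_dec => ? /=; lra.
Qed.

Lemma qint_is_comul_evalc (f : T -> R) : qint_is f phi (Rmax 0 (Rmin (f w1) (f w2))).
Proof.
move=> M HM HfM; apply: RiemannInt_indicator_lt HM _ => [l|].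
  exact: comul_evalc_levelset.
exact: Rle_trans (Rmin_l _ _) (HfM w1).
Qed.

Lemma two_point_set (A : {set T}) :
  A = if w1 \in A then (if w2 \in A then setT else [set w1])
      else (if w2 \in A then [set w2] else set0).
Proof.
have /negbTE n12 : w1 != w2 by apply/eqP.
have /negbTE n21 : w2 != w1 by apply/eqP => E; apply: w1_neq_w2.
apply/setP => w; case h1: (w1 \in A); case h2: (w2 \in A);
  by have [-> | ->] := two_points w; rewrite ?inE ?eqxx ?n12 ?n21 ?h1 ?h2.
Qed.

Lemma qmeasure_two_point (mu : {set T} -> R) (A : {set T}) :
  is_qmeasure mu -> mu [set w1] = 0 -> mu [set w2] = 0 -> 0 <= mu setT ->
  let c := mu setT in
  mu A = Rmax 0 (Rmin (if w1 \in A then c else 0) (if w2 \in A then c else 0)).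
Proof.
move=> hmu H1 H2 Hc c; rewrite {1}(two_point_set A).
case: (w1 \in A); case: (w2 \in A).
- by rewrite Rmax0_Rmin_diag.
- by rewrite H1 Rmax0_Rmin_eq0r.
- by rewrite H2 Rmax0_Rmin_eq0l.
- by rewrite qmeasure_set0 // Rmax0_Rmin_eq0l //; lra.
Qed.

End TwoPoints.

Theorem theorem4p2 (T : finType) (w1 w2 : T) (hne : w1 <> w2)
  (hT : forall w : T, w = w1 \/ w = w2)
  (mu : {set T} -> R) (hmu : is_qmeasure mu) :
  actualizes mu (comul (evalc w1) (evalc w2)) <->
  (mu [set w1] = 0 /\ mu [set w2] = 0 /\ 0 < mu [set: T]).
Proof.
have /negbTE n12 : w1 != w2 by apply/eqP.
have /negbTE n21 : w2 != w1 by apply/eqP => E; apply: hne.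
split.
- move=> [f [_ [fpos [g [Hg Hmu]]]]].
  have Eg A w' := qint_is_unique (Hg A w') (qint_is_comul_evalc w1 w2 _).
  have Emu A := qint_is_unique (Hmu A) (qint_is_comul_evalc w1 w2 _).
  have g1 w' : g [set w1] w' = 0.
    by rewrite Eg !inE eqxx n21 Rmax0_Rmin_eq0r //; left.
  have g2 w' : g [set w2] w' = 0.
    by rewrite Eg !inE eqxx n12 Rmax0_Rmin_eq0l //; left.
  rewrite !Emu !g1 !g2 !Eg !inE (Rmax0_Rmin_diag _ (Rle_refl 0)).
  by do 2!split=> //; apply: Rmax0_Rmin_gt0; apply: Rmax0_Rmin_gt0.
- move=> [H1 [H2 Hc]]; set c := mu setT.
  pose gc (A : {set T}) (_ : T) :=
    Rmax 0 (Rmin (if w1 \in A then c else 0) (if w2 \in A then c else 0)).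
  exists (fun _ _ => c); do 2!split => //; exists gc; split=> [A w' | A].
  + exact: (qint_is_comul_evalc w1 w2 (fun w => if w \in A then c else 0)).
  + rewrite (qmeasure_two_point _ _ hne hT _ A hmu H1 H2 (Rlt_le _ _ Hc)).
    have := qint_is_comul_evalc w1 w2 (gc A).
    by rewrite /gc Rmax0_Rmin_diag //; apply: Rmax_l.
Qed.
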